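(* Let $R$ be a commutative ring. (1) If $\{\mathbb M_i\}_{i\in I}$ is a direct system of dually separated $\mathcal R$-modules indexed by an upward directed set $I$, then $\varinjlim_i\mathbb M_i$ is dually separated. (2) If $\mathbb M$ is a dually separated $\mathcal R$-module and $\mathbb M\to\mathbb N$ is an epimorphism of $\mathcal R$-modules (surjective on every $S$), then $\mathbb N$ is dually separated.
   Context: An $\mathcal R$-module is a covariant functor $\mathbb M$ from commutative $R$-algebras to abelian groups with each $\mathbb M(S)$ an $S$-module, functorially; morphisms are natural transformations that are $S$-linear on each $S$; limits, colimits, kernels, cokernels are computed objectwise. $\mathbb M^*(S)=\operatorname{Hom}_{\mathcal S}(\mathbb M_{|S},\mathcal S)$ where $\mathbb M_{|S}$ is restriction to $S$-algebras and $\mathcal S(T)=T$. $\mathbb M$ is dually separated if for every commutative $R$-algebra $S$ the map $\mathbb M^*(S)\to\operatorname{Hom}_R(\mathbb M(R),S)$, $w\mapsto w_R$, is injective. *)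

From HB Require Import structures.
From mathcomp Require Import all_boot all_algebra.
Set Implicit Arguments. Unset Strict Implicit. Unset Printing Implicit Defensive.
Import GRing.Theory.
Local Open Scope ring_scope.

Record calg (R : comPzRingType) := CAlg {
  calg_car :> comPzRingType;
  calg_str : {rmorphism R -> calg_car} }.

Record alg_hom (R : comPzRingType) (A B : calg R) := AlgHom {
  ahom :> {rmorphism calg_car A -> calg_car B};
  ahomE : forall r, ahom (calg_str A r) = calg_str B r }.

Definition calg_self (R : comPzRingType) : calg R :=
  @CAlg R R (idfun : {rmorphism R -> R}).

Definition alg_id (R : comPzRingType) (A : calg R) : alg_hom A A :=
  @AlgHom R A A (idfun : {rmorphism calg_car A -> calg_car A}) (fun r => erefl).

Definition alg_unit (R : comPzRingType) (A : calg R) : alg_hom (calg_self R) A :=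
  @AlgHom R (calg_self R) A (calg_str A) (fun r => erefl).

(* An R-module (functor from commutative R-algebras to abelian groups, each
   M(S) an S-module, functorially). *)
Record RMod (R : comPzRingType) := {
  mod_ob :> forall A : calg R, lmodType (calg_car A);
  mod_map : forall (A B : calg R), alg_hom A B -> mod_ob A -> mod_ob B;
  mod_mapD : forall A B (f : alg_hom A B) (x y : mod_ob A),
      mod_map f (x + y) = mod_map f x + mod_map f y;
  mod_mapZ : forall A B (f : alg_hom A B) (a : calg_car A) (x : mod_ob A),
      mod_map f (a *: x) = f a *: mod_map f x;
  mod_map_id : forall A (f : alg_hom A A), (forall a, f a = a) ->
      forall x, mod_map f x = x;
  mod_map_comp : forall A B C (f : alg_hom A B) (g : alg_hom B C)
      (h : alg_hom A C), (forall a, h a = g (f a)) ->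
      forall x, mod_map h x = mod_map g (mod_map f x) }.

Definition is_RMod_hom (R : comPzRingType) (M N : RMod R)
    (eta : forall A : calg R, M A -> N A) : Prop :=
  (forall A (x y : M A), eta A (x + y) = eta A x + eta A y) /\
  (forall A (a : calg_car A) (x : M A), eta A (a *: x) = a *: eta A x) /\
  (forall A B (f : alg_hom A B) (x : M A),
      eta B (mod_map f x) = mod_map f (eta A x)).

(* Elements of M^*(S) = Hom_S(M_{|S}, S): an S-algebra is an R-algebra T
   with a morphism of R-algebras phi : S -> T; w is a natural family of
   T-linear maps M(T) -> T. *)
Definition is_dual_elt (R : comPzRingType) (M : RMod R) (S : calg R)
    (w : forall T : calg R, alg_hom S T -> M T -> calg_car T) : Prop :=
  (forall T (phi : alg_hom S T) (x y : M T),
      w T phi (x + y) = w T phi x + w T phi y) /\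
  (forall T (phi : alg_hom S T) (t : calg_car T) (x : M T),
      w T phi (t *: x) = t * w T phi x) /\
  (forall T T' (phi : alg_hom S T) (phi' : alg_hom S T') (g : alg_hom T T'),
      (forall s, g (phi s) = phi' s) ->
      forall x : M T, w T' phi' (mod_map g x) = g (w T phi x)).

(* w_R : M(R) -> S is the composite M(R) -> M(S) -> S. *)
Definition dual_restr (R : comPzRingType) (M : RMod R) (S : calg R)
    (w : forall T : calg R, alg_hom S T -> M T -> calg_car T)
    (x : M (calg_self R)) : calg_car S :=
  w S (alg_id S) (mod_map (alg_unit S) x).

(* M is dually separated: w |-> w_R is injective on M^*(S) for every S. *)
Definition dually_separated (R : comPzRingType) (M : RMod R) : Prop :=
  forall (S : calg R) (w w' : forall T : calg R, alg_hom S T -> M T -> calg_car T),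
    is_dual_elt w -> is_dual_elt w' ->
    (forall x, dual_restr w x = dual_restr w' x) ->
    forall T (phi : alg_hom S T) (x : M T), w T phi x = w' T phi x.

(* (L, f) is the colimit of the system (M, u), computed objectwise:
   for each S, (L(S), f_i(S)) is a colimit of the M_i(S) in S-modules. *)
Definition is_objectwise_colimit (R : comPzRingType) (I : Type)
    (le : I -> I -> Prop) (M : I -> RMod R)
    (u : forall i j, le i j -> forall A : calg R, M i A -> M j A)
    (L : RMod R) (f : forall i (A : calg R), M i A -> L A) : Prop :=
  forall (A : calg R) (G : lmodType (calg_car A)) (g : forall i, M i A -> G),
    (forall i (x y : M i A), g i (x + y) = g i x + g i y) ->
    (forall i (a : calg_car A) (x : M i A), g i (a *: x) = a *: g i x) ->
    (forall i j (h : le i j) (x : M i A), g j (u i j h A x) = g i x) ->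
    exists h : L A -> G,
      [/\ (forall x y, h (x + y) = h x + h y),
          (forall (a : calg_car A) x, h (a *: x) = a *: h x),
          (forall i x, h (f i A x) = g i x) &
          (forall h' : L A -> G,
              (forall x y, h' (x + y) = h' x + h' y) ->
              (forall (a : calg_car A) x, h' (a *: x) = a *: h' x) ->
              (forall i x, h' (f i A x) = g i x) ->
              forall y, h' y = h y)].

From HB Require Import structures.
From mathcomp Require Import all_boot all_algebra.
Set Implicit Arguments. Unset Strict Implicit. Unset Printing Implicit Defensive.
Import GRing.Theory.
Local Open Scope ring_scope.

(* A morphism eta : M -> N induces eta^* : N^*(S) -> M^*(S), compatible with
   restriction to R-points.  Hence two dual elements of N with the same
   restriction pull back to the same dual element of M whenever M is dually
   separated, i.e. they agree on the image of eta.  For an epimorphism the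
   image is everything; for a colimit the images of the M_i generate, and two
   linear maps out of the colimit agreeing on them coincide. *)

Section DualPullback.

Variables (R : comPzRingType) (M N : RMod R).
Variable eta : forall A : calg R, M A -> N A.
Hypothesis eta_hom : is_RMod_hom eta.
Variable S : calg R.

Definition dual_precomp (w : forall T : calg R, alg_hom S T -> N T -> calg_car T) :
    forall T : calg R, alg_hom S T -> M T -> calg_car T :=
  fun T phi x => w T phi (eta x).

Lemma is_dual_elt_precomp w : is_dual_elt w -> is_dual_elt (dual_precomp w).
Proof.
case: eta_hom => [etaD [etaZ etaN]] [wD [wZ wN]]; rewrite /dual_precomp.
split; [|split].
- by move=> T phi x y; rewrite etaD wD.
- by move=> T phi t x; rewrite etaZ wZ.
- by move=> T T' phi phi' g gphi x; rewrite etaN (wN _ _ phi phi').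
Qed.

Lemma dual_restr_precomp w x :
  dual_restr (dual_precomp w) x = dual_restr w (eta x).
Proof. by case: eta_hom => _ [_ etaN]; rewrite /dual_restr /dual_precomp etaN. Qed.

Lemma dual_elt_eq_on_image w w' :
  dually_separated M -> is_dual_elt w -> is_dual_elt w' ->
  (forall x, dual_restr w x = dual_restr w' x) ->
  forall T (phi : alg_hom S T) (x : M T), w T phi (eta x) = w' T phi (eta x).
Proof.
move=> Msep wd w'd weq T phi x.
apply: (Msep S (dual_precomp w) (dual_precomp w')); try exact: is_dual_elt_precomp.
by move=> y; rewrite !dual_restr_precomp.
Qed.

End DualPullback.

Lemma dually_separated_epi (R : comPzRingType) (M N : RMod R)
    (eta : forall A : calg R, M A -> N A) :
  is_RMod_hom eta -> (forall A (y : N A), exists x : M A, eta A x = y) ->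
  dually_separated M -> dually_separated N.
Proof.
move=> eta_hom eta_surj Msep S w w' wd w'd weq T phi y.
have [x <-] := eta_surj T y.
exact: (dual_elt_eq_on_image eta_hom Msep wd w'd weq).
Qed.

Lemma colimit_hom_ext (R : comPzRingType) (I : Type) (le : I -> I -> Prop)
    (M : I -> RMod R) (u : forall i j, le i j -> forall A : calg R, M i A -> M j A)
    (L : RMod R) (f : forall i (A : calg R), M i A -> L A) (A : calg R)
    (G : lmodType (calg_car A)) (h1 h2 : L A -> G) :
  is_objectwise_colimit u f -> (forall i, is_RMod_hom (f i)) ->
  (forall i j (hij : le i j) x, f j A (u i j hij A x) = f i A x) ->
  (forall x y, h1 (x + y) = h1 x + h1 y) -> (forall a x, h1 (a *: x) = a *: h1 x) ->
  (forall x y, h2 (x + y) = h2 x + h2 y) -> (forall a x, h2 (a *: x) = a *: h2 x) ->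
  (forall i x, h1 (f i A x) = h2 (f i A x)) ->
  forall y, h1 y = h2 y.
Proof.
move=> colim f_hom fcomp h1D h1Z h2D h2Z h12 y.
pose g i (x : M i A) := h1 (f i A x).
have gD i (x x' : M i A) : g i (x + x') = g i x + g i x'.
  by case: (f_hom i) => fD _; rewrite /g fD h1D.
have gZ i a (x : M i A) : g i (a *: x) = a *: g i x.
  by case: (f_hom i) => _ [fZ _]; rewrite /g fZ h1Z.
have gu i j (hij : le i j) x : g j (u i j hij A x) = g i x by rewrite /g fcomp.
have [h [_ _ _ h_uniq]] := colim A G g gD gZ gu.
by rewrite (h_uniq h1) // (h_uniq h2) // => i x; rewrite -h12.
Qed.

Lemma dually_separated_colimit (R : comPzRingType) (I : Type) (le : I -> I -> Prop)
    (M : I -> RMod R) (u : forall i j, le i j -> forall A : calg R, M i A -> M j A)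
    (L : RMod R) (f : forall i (A : calg R), M i A -> L A) :
  is_objectwise_colimit u f -> (forall i, is_RMod_hom (f i)) ->
  (forall i j (hij : le i j) A x, f j A (u i j hij A x) = f i A x) ->
  (forall i, dually_separated (M i)) -> dually_separated L.
Proof.
move=> colim f_hom fcomp Msep S w w' wd w'd weq T phi.
have [[wD [wZ _]] [w'D [w'Z _]]] := (wd, w'd).
apply: (colimit_hom_ext (G := (calg_car T)^o) colim f_hom).
- by move=> i j hij; apply: fcomp.
- exact: wD.
- exact: wZ.
- exact: w'D.
- exact: w'Z.
- by move=> i; apply: (dual_elt_eq_on_image (f_hom i) (Msep i) wd w'd weq).
Qed.

(* The directedness of the index set is not needed: the colimit being computed
   objectwise is all that is used. *)
Theorem proposition3p4 (R : comPzRingType) :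
  (forall (I : Type) (le : I -> I -> Prop),
     (forall i, le i i) ->
     (forall i j k, le i j -> le j k -> le i k) ->
     (forall i j, exists k, le i k /\ le j k) ->
     forall (M : I -> RMod R)
       (u : forall i j, le i j -> forall A : calg R, M i A -> M j A),
     (forall i j (h : le i j), is_RMod_hom (u i j h)) ->
     (forall i (h : le i i) A x, u i i h A x = x) ->
     (forall i j k (hij : le i j) (hjk : le j k) (hik : le i k) A x,
        u i k hik A x = u j k hjk A (u i j hij A x)) ->
     forall (L : RMod R) (f : forall i (A : calg R), M i A -> L A),
     (forall i, is_RMod_hom (f i)) ->
     (forall i j (h : le i j) A x, f j A (u i j h A x) = f i A x) ->
     is_objectwise_colimit u f ->
     (forall i, dually_separated (M i)) ->
     dually_separated L) /\
  (forall (M N : RMod R) (eta : forall A : calg R, M A -> N A),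
     is_RMod_hom eta ->
     (forall A : calg R, forall y : N A, exists x : M A, eta A x = y) ->
     dually_separated M ->
     dually_separated N).
Proof.
split; last exact: dually_separated_epi.
move=> I le _ _ _ M u _ _ _ L f f_hom fcomp colim.
exact: dually_separated_colimit colim f_hom fcomp.
Qed.
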